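(* There are no rational numbers (in particular, no integers) $x_1,x_2,x_3,d_1,d_2,d_3,L$ with $x_1,x_2,x_3,d_1,d_2,d_3>0$ such that $\operatorname{rank}N\le 2$, $\operatorname{rank}N_1=2$, $\operatorname{rank}N_2=2$, and $\tilde p_1=\tilde p_2=\dots=\tilde p_8=0$. Likewise there are no such positive rational numbers with $\operatorname{rank}N\le 2$, $\operatorname{rank}N_1=\operatorname{rank}N_2=2$ satisfying $p_0=p_1=p_2=p_3=0$.
   Context: Define $p_0=x_1^2+x_2^2+x_3^2-L^2$, $p_1=x_2^2+x_3^2-d_1^2$, $p_2=x_3^2+x_1^2-d_2^2$, $p_3=x_1^2+x_2^2-d_3^2$, and $\tilde p_1=p_0$, $\tilde p_2=p_1+p_2+p_3$, $\tilde p_3=d_1p_1+d_2p_2+d_3p_3$, $\tilde p_4=x_1p_1+x_2p_2+x_3p_3$, $\tilde p_5=x_1d_1p_1+x_2d_2p_2+x_3d_3p_3$, $\tilde p_6=x_1^2p_1+x_2^2p_2+x_3^2p_3$, $\tilde p_7=d_1^2p_1+d_2^2p_2+d_3^2p_3$, $\tilde p_8=x_1^2d_1^2p_1+x_2^2d_2^2p_2+x_3^2d_3^2p_3$. $N$ is the $3\times 7$ matrix whose $i$-th row is $(1,\ d_i,\ x_i,\ x_id_i,\ x_i^2,\ d_i^2,\ x_i^2d_i^2)$; $N_1$ is the $3\times 2$ matrix with rows $(1,d_i)$; $N_2$ is the $3\times 2$ matrix with rows $(1,x_i)$, $i=1,2,3$. Ranks are over $\mathbb{Q}$. *)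

From HB Require Import structures.
From mathcomp Require Import all_boot all_order all_algebra.
Set Implicit Arguments. Unset Strict Implicit. Unset Printing Implicit Defensive.
Import Order.TTheory GRing.Theory Num.Theory.
Local Open Scope ring_scope.

Definition vec3 (a1 a2 a3 : rat) (i : 'I_3) : rat :=
  match val i with 0%N => a1 | 1%N => a2 | _ => a3 end.

(* p_0 and p_i (i = 1,2,3 encoded as indices 0,1,2) *)
Definition p0 (x1 x2 x3 L : rat) : rat := x1^+2 + x2^+2 + x3^+2 - L^+2.
Definition pp (x1 x2 x3 d1 d2 d3 : rat) (i : 'I_3) : rat :=
  match val i with
  | 0%N => x2^+2 + x3^+2 - d1^+2
  | 1%N => x3^+2 + x1^+2 - d2^+2
  | _ => x1^+2 + x2^+2 - d3^+2 end.

Definition Nrow (xi di : rat) (j : 'I_7) : rat :=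
  match val j with
  | 0%N => 1 | 1%N => di | 2%N => xi | 3%N => xi * di
  | 4%N => xi^+2 | 5%N => di^+2 | _ => xi^+2 * di^+2 end.
Definition Nmat (x1 x2 x3 d1 d2 d3 : rat) : 'M[rat]_(3,7) :=
  \matrix_(i < 3, j < 7) Nrow (vec3 x1 x2 x3 i) (vec3 d1 d2 d3 i) j.
Definition N1mat (d1 d2 d3 : rat) : 'M[rat]_(3,2) :=
  \matrix_(i < 3, j < 2) (if val j == 0%N then 1 else vec3 d1 d2 d3 i).
Definition N2mat (x1 x2 x3 : rat) : 'M[rat]_(3,2) :=
  \matrix_(i < 3, j < 2) (if val j == 0%N then 1 else vec3 x1 x2 x3 i).

(* tilde p_k, k = 2..8: sum_i c_k(i) p_i with c the weights of the paper *)
Definition ptilde_sum (x1 x2 x3 d1 d2 d3 : rat) (c : 'I_3 -> rat) : rat :=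
  \sum_(i < 3) c i * pp x1 x2 x3 d1 d2 d3 i.

Definition ptilde_all_zero (x1 x2 x3 d1 d2 d3 L : rat) : Prop :=
  let x := vec3 x1 x2 x3 in let d := vec3 d1 d2 d3 in
  let S := ptilde_sum x1 x2 x3 d1 d2 d3 in
  p0 x1 x2 x3 L = 0 /\
  S (fun _ => 1) = 0 /\
  S d = 0 /\
  S x = 0 /\
  S (fun i => x i * d i) = 0 /\
  S (fun i => x i ^+ 2) = 0 /\
  S (fun i => d i ^+ 2) = 0 /\
  S (fun i => x i ^+ 2 * d i ^+ 2) = 0.

From HB Require Import structures.
From mathcomp Require Import all_boot all_order all_algebra.
From mathcomp Require Import zify ring.
Set Implicit Arguments. Unset Strict Implicit. Unset Printing Implicit Defensive.
Import Order.TTheory GRing.Theory Num.Theory.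
Local Open Scope ring_scope.

(* Proof of Theorem 6.2.  If rank N <= 2, the three rows of N are linearly
   dependent: some nonzero (a, b, c) annihilates every column of N, in
   particular the columns 1, d, x and d^2.  The columns 1, d, d^2 form a
   Vandermonde system in the nodes d1, d2, d3, so two nodes coincide; since
   rank N1 = 2 the third node k differs, and the x-column then forces the two
   coinciding rows to share the same x, say y.  Hence p_k = y^2 + y^2 - d_k^2,
   which is nonzero because sqrt 2 is irrational.  In the second statement
   p_k = 0 is a hypothesis; in the first it follows from ~p2 = ~p3 = 0, since
   the only weight not multiplied by the common node value is p_k itself. *)

(* A perfect square is never twice a nonzero perfect square: compare the
   parities of the 2-adic valuations. *)
Lemma double_square_nat (m k : nat) : (m ^ 2 = 2 * k ^ 2)%N -> k = 0%N.
Proof.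
move=> E; apply/eqP; rewrite -[_ == _]negbK -lt0n; apply/negP => k_gt0.
have m_gt0 : (0 < m)%N by rewrite lt0n; apply: contraTneq k_gt0 => m0; nia.
have := congr1 (logn 2) E.
by rewrite lognM ?expn_gt0 ?k_gt0 // !lognX (@pfactorK 2 1) //; lia.
Qed.

Lemma sqrt2_irrational (r : rat) : r ^+ 2 != 2.
Proof.
rewrite -[r]divq_num_den expr_div_n; apply/eqP => E.
have den_neq0 : (denq r)%:~R ^+ 2 != 0 :> rat by rewrite expf_neq0 ?intr_eq0 ?denq_neq0.
have Eint : numq r ^+ 2 = 2 * denq r ^+ 2.
  apply: (@intr_inj rat); rewrite !intrM -!expr2.
  by have -> : (2 : int)%:~R = 2 :> rat by []; rewrite -E divfK.
have := congr1 absz Eint; rewrite abszM !abszX => /double_square_nat/eqP.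
by rewrite absz_eq0 denq_eq0.
Qed.

Lemma no_rational_isosceles (y e : rat) : y != 0 -> y ^+ 2 + y ^+ 2 != e ^+ 2.
Proof.
move=> y_neq0; apply: contra (sqrt2_irrational (e / y)) => /eqP E.
by rewrite expr_div_n -E mulrDl divff ?expf_neq0.
Qed.

Lemma rank_deficient_left_kernel (F : fieldType) m n (A : 'M[F]_(m, n)) :
  (\rank A < m)%N -> exists2 v : 'rV_m, v != 0 & v *m A = 0.
Proof.
rewrite ltnNge row_leq_rank -kermx_eq0 => /rowV0Pn[v /sub_kermxP vA v_neq0].
by exists v.
Qed.

(* A nonzero triple (a, b, c) orthogonal to the columns 1, d, x and d^2 of N:
   the data extracted from a left kernel vector of N. *)
Definition annihilates_columns (F : comPzRingType) (a b c x1 x2 x3 d1 d2 d3 : F) : Prop :=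
  [/\ [|| a != 0, b != 0 | c != 0],
      a + b + c = 0,
      a * d1 + b * d2 + c * d3 = 0,
      a * x1 + b * x2 + c * x3 = 0 &
      a * d1 ^+ 2 + b * d2 ^+ 2 + c * d3 ^+ 2 = 0].

Section Annihilator.
Variables (F : fieldType) (a b c x1 x2 x3 d1 d2 d3 : F).
Hypothesis ann : annihilates_columns a b c x1 x2 x3 d1 d2 d3.

(* The relations are invariant under a simultaneous permutation of the rows;
   a rotation and a transposition generate all the symmetries needed. *)
Lemma annihilates_rot : annihilates_columns b c a x2 x3 x1 d2 d3 d1.
Proof.
case: ann => nz h1 hd hx hd2; split.
- by rewrite orbC -orbA in nz.
- by rewrite -h1; ring.
- by rewrite -hd; ring.
- by rewrite -hx; ring.
- by rewrite -hd2; ring.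
Qed.

Lemma annihilates_swap : annihilates_columns b a c x2 x1 x3 d2 d1 d3.
Proof.
case: ann => nz h1 hd hx hd2; split.
- by rewrite orbCA in nz.
- by rewrite -h1; ring.
- by rewrite -hd; ring.
- by rewrite -hx; ring.
- by rewrite -hd2; ring.
Qed.

(* Lagrange interpolation at the node d1: pairing the relations with the
   quadratic (t - d2)(t - d3) isolates the first weight. *)
Lemma lagrange_node : a * (d1 - d2) * (d1 - d3) = 0.
Proof.
case: ann => _ h1 hd _ hd2.
have -> : a * (d1 - d2) * (d1 - d3) = (a * d1 ^+ 2 + b * d2 ^+ 2 + c * d3 ^+ 2)
  - (d2 + d3) * (a * d1 + b * d2 + c * d3) + d2 * d3 * (a + b + c) by ring.
by rewrite h1 hd hd2 !mulr0 subrr addr0.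
Qed.

Lemma weight_vanishes : d1 != d2 -> d1 != d3 -> a = 0.
Proof.
move=> n12 n13; move/eqP: lagrange_node.
by rewrite !mulf_eq0 !subr_eq0 (negPf n12) (negPf n13) !orbF => /eqP.
Qed.

End Annihilator.

(* If exactly the first two nodes coincide, the third weight vanishes, the
   first two are opposite and nonzero, so the x-column forces x1 = x2. *)
Lemma coincident_pair (F : fieldType) (a b c x1 x2 x3 d1 d2 d3 : F) :
  annihilates_columns a b c x1 x2 x3 d1 d2 d3 -> d1 = d2 -> d3 != d1 -> x1 = x2.
Proof.
move=> ann e12 n31; have [nz h1 _ hx _] := ann.
have c0 : c = 0.
  by apply: (weight_vanishes (annihilates_rot (annihilates_rot ann))); rewrite // -e12.
move: nz h1 hx; rewrite c0 eqxx orbF mul0r !addr0 => nz h1 hx.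
have ba : b = - a by apply/eqP; rewrite -addr_eq0 addrC h1.
have a_neq0 : a != 0 by move: nz; rewrite ba oppr_eq0 orbb.
apply/eqP; rewrite -subr_eq0; apply: contraLR a_neq0 => n.
by move: hx; rewrite ba mulNr -mulrBr => /eqP; rewrite mulf_eq0 (negPf n) orbF negbK.
Qed.

Lemma distinct_nodes_no_annihilator (F : fieldType) (a b c x1 x2 x3 d1 d2 d3 : F) :
  annihilates_columns a b c x1 x2 x3 d1 d2 d3 -> d1 != d2 -> d1 != d3 -> d2 != d3 -> False.
Proof.
move=> ann n12 n13 n23; have [nz _ _ _ _] := ann.
have a0 := weight_vanishes ann n12 n13.
have b0 : b = 0 by apply: (weight_vanishes (annihilates_rot ann)); rewrite // eq_sym.
have c0 : c = 0.
  by apply: (weight_vanishes (annihilates_rot (annihilates_rot ann))); rewrite eq_sym.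
by move: nz; rewrite a0 b0 c0 eqxx.
Qed.

Lemma annihilator_pair_cases (F : fieldType) (a b c x1 x2 x3 d1 d2 d3 : F) :
  annihilates_columns a b c x1 x2 x3 d1 d2 d3 -> ~ (d1 = d2 /\ d2 = d3) ->
  [\/ [/\ d1 = d2, x1 = x2 & d3 != d1], [/\ d1 = d3, x1 = x3 & d2 != d1]
    | [/\ d2 = d3, x2 = x3 & d1 != d2]].
Proof.
move=> ann nonconst; have [e12|n12] := eqVneq d1 d2.
  have n31 : d3 != d1 by apply/eqP => e31; apply: nonconst; rewrite -e12 e31.
  by constructor 1; split => //; apply: coincident_pair ann e12 n31.
have [e13|n13] := eqVneq d1 d3.
  have n21 : d2 != d1 by rewrite eq_sym.
  constructor 2; split => //.
  exact: coincident_pair (annihilates_swap (annihilates_rot (annihilates_rot ann))) e13 n21.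
have [e23|n23] := eqVneq d2 d3.
  by constructor 3; split => //; apply: coincident_pair (annihilates_rot ann) e23 n12.
by case: (distinct_nodes_no_annihilator ann n12 n13 n23).
Qed.

Lemma ord3_ind (P : 'I_3 -> Prop) : P 0 -> P 1 -> P 2 -> forall i, P i.
Proof.
move=> P0 P1 P2 [[|[|[|//]]] lt_i3].
- by have -> : Ordinal lt_i3 = 0 by apply: val_inj.
- by have -> : Ordinal lt_i3 = 1 by apply: val_inj.
- by have -> : Ordinal lt_i3 = 2 by apply: val_inj.
Qed.

Lemma sum_ord3 (V : nmodType) (f : 'I_3 -> V) : \sum_(i < 3) f i = f 0 + f 1 + f 2.
Proof.
rewrite !big_ord_recl big_ord0 addr0 addrA.
by congr (f _ + f _ + f _); apply: val_inj.
Qed.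

(* If all nodes but d_k take the common value e, the relations sum q = 0 and
   sum d q = 0 force q_k = 0, since sum (d - e) q = (d_k - e) q_k. *)
Lemma isolated_weight_vanishes (I : finType) (F : fieldType) (d q : I -> F) k e :
  (forall i, i != k -> d i = e) -> d k != e ->
  \sum_i q i = 0 -> \sum_i d i * q i = 0 -> q k = 0.
Proof.
move=> d_off_k dk_neq_e sum_q sum_dq.
have : (d k - e) * q k = \sum_i d i * q i - e * \sum_i q i.
  rewrite mulr_sumr -sumrB (bigD1 k) //= big1 ?addr0 => [|i ik]; first by rewrite mulrBl.
  by rewrite d_off_k // subrr.
rewrite sum_dq sum_q mulr0 subrr => /eqP; rewrite mulf_eq0 subr_eq0 (negPf dk_neq_e).
by move/eqP.
Qed.

Lemma Nmat_annihilator (x1 x2 x3 d1 d2 d3 : rat) :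
  (\rank (Nmat x1 x2 x3 d1 d2 d3) <= 2)%N ->
  exists a b c, annihilates_columns a b c x1 x2 x3 d1 d2 d3.
Proof.
rewrite -ltnS => rankN.
have [v v_neq0 vN] := rank_deficient_left_kernel rankN.
have column (j : 'I_7) :
    \sum_(i < 3) v 0 i * Nrow (vec3 x1 x2 x3 i) (vec3 d1 d2 d3 i) j = 0.
  move/rowP/(_ j): vN; rewrite !mxE; apply: etrans.
  by apply: eq_bigr => i _; rewrite mxE.
exists (v 0 0), (v 0 1), (v 0 2); split.
- apply: contraNT v_neq0; rewrite !negb_or !negbK => /and3P[/eqP v0 /eqP v1 /eqP v2].
  by apply/eqP/rowP; apply: ord3_ind; rewrite mxE.
- by have := column (@Ordinal 7 0 isT); rewrite sum_ord3 /= !mulr1.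
- by have := column (@Ordinal 7 1 isT); rewrite sum_ord3.
- by have := column (@Ordinal 7 2 isT); rewrite sum_ord3.
- by have := column (@Ordinal 7 5 isT); rewrite sum_ord3.
Qed.

(* rank N1 = 2 rules out constant nodes: then N1 factors through one column. *)
Lemma N1mat_rank2_nonconstant (d1 d2 d3 : rat) :
  \rank (N1mat d1 d2 d3) = 2%N -> ~ (d1 = d2 /\ d2 = d3).
Proof.
move=> + [e12 e23]; rewrite e12 e23 => rankN1.
pose ones : 'cV[rat]_3 := const_mx 1.
have factor : N1mat d3 d3 d3 = ones *m \row_(j < 2) (if val j == 0%N then 1 else d3).
  apply/matrixP => i j; rewrite !mxE big_ord1 !mxE mul1r.
  by case: i => [[|[|]] ?].
have := mxrankM_maxl ones (\row_(j < 2) (if val j == 0%N then 1 else d3)).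
by rewrite -factor rankN1 => /leq_trans/(_ (rank_leq_col ones)).
Qed.

Lemma odd_index (x1 x2 x3 d1 d2 d3 : rat) :
  0 < x1 -> 0 < x2 -> 0 < x3 ->
  (\rank (Nmat x1 x2 x3 d1 d2 d3) <= 2)%N -> \rank (N1mat d1 d2 d3) = 2%N ->
  exists k e, [/\ forall i, i != k -> vec3 d1 d2 d3 i = e,
                  vec3 d1 d2 d3 k != e & pp x1 x2 x3 d1 d2 d3 k != 0].
Proof.
move=> x1_gt0 x2_gt0 x3_gt0 /Nmat_annihilator[a [b [c ann]]] /N1mat_rank2_nonconstant.
case/(annihilator_pair_cases ann) => -[e x_eq n].
- exists 2, d1; split => //; first by apply: ord3_ind.
  by rewrite /pp /= -x_eq subr_eq0 no_rational_isosceles ?gt_eqF.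
- exists 1, d1; split => //; first by apply: ord3_ind.
  by rewrite /pp /= x_eq subr_eq0 no_rational_isosceles ?gt_eqF.
- exists 0, d2; split => //; first by apply: ord3_ind.
  by rewrite /pp /= -x_eq subr_eq0 no_rational_isosceles ?gt_eqF.
Qed.

Theorem theorem6p2 :
  (~ exists x1 x2 x3 d1 d2 d3 L : rat,
       (0 < x1 /\ 0 < x2 /\ 0 < x3 /\ 0 < d1 /\ 0 < d2 /\ 0 < d3) /\
       [/\ (\rank (Nmat x1 x2 x3 d1 d2 d3) <= 2)%N,
           \rank (N1mat d1 d2 d3) = 2%N,
           \rank (N2mat x1 x2 x3) = 2%N &
           ptilde_all_zero x1 x2 x3 d1 d2 d3 L]) /\
  (~ exists x1 x2 x3 d1 d2 d3 L : rat,
       (0 < x1 /\ 0 < x2 /\ 0 < x3 /\ 0 < d1 /\ 0 < d2 /\ 0 < d3) /\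
       [/\ (\rank (Nmat x1 x2 x3 d1 d2 d3) <= 2)%N,
           \rank (N1mat d1 d2 d3) = 2%N,
           \rank (N2mat x1 x2 x3) = 2%N &
           [/\ p0 x1 x2 x3 L = 0,
               pp x1 x2 x3 d1 d2 d3 0 = 0,
               pp x1 x2 x3 d1 d2 d3 1 = 0 &
               pp x1 x2 x3 d1 d2 d3 2 = 0]]).
Proof.
split=> -[x1 [x2 [x3 [d1 [d2 [d3 [L [[x1_gt0 [x2_gt0 [x3_gt0 _]]] [rankN rankN1 _ eqs]]]]]]]]];
  have [k [e [d_off_k dk_neq_e pk_neq0]]] := odd_index x1_gt0 x2_gt0 x3_gt0 rankN rankN1;
  apply/negP: pk_neq0; rewrite negbK; apply/eqP.
- (* ~p2 = sum p_i and ~p3 = sum d_i p_i both vanish, hence so does p_k. *)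
  case: eqs => _ [sum_p [sum_dp _]].
  apply: isolated_weight_vanishes d_off_k dk_neq_e _ sum_dp.
  by rewrite -[RHS]sum_p; apply: eq_bigr => i _; rewrite mul1r.
- by case: eqs => _ p1 p2 p3; move: k {d_off_k dk_neq_e}; apply: ord3_ind.
Qed.
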